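(* If $G$ is an infinite, connected, locally finite graph with finite metric dimension, then $G$ does not contain an infinite family of metric rays whose vertex sets are pairwise disjoint.
   Context: $d$ denotes shortest-path distance in $G$. A vertex $x$ resolves $u,v$ if $d(u,x)\ne d(v,x)$; a set $S$ of vertices is a resolving set if every pair of distinct vertices is resolved by some vertex of $S$. The metric dimension $\beta(G)$ is the minimum cardinality of a resolving set if a finite one exists, and $\infty$ otherwise. A metric ray of $G$ with endpoint $u_0$ is an infinite subgraph $P$ whose vertices admit an ordering $u_0,u_1,u_2,\dots$ (all distinct) with $u_k$ adjacent to $u_{k+1}$ in $P$ and $d_G(u_0,u_k)=k$ for all $k\ge 0$. *)

(* A (simple, possibly infinite) graph is a type V of vertices
   with an adjacency relation adj : V -> V -> Prop (assumed symmetric and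
   irreflexive in the theorem). *)
From Stdlib Require Import List Arith.
Import ListNotations.

Section Graph.
Variable V : Type.
Variable adj : V -> V -> Prop.

Inductive has_walk : V -> V -> nat -> Prop :=
| walk_nil : forall u, has_walk u u 0
| walk_cons : forall u w v n, adj u w -> has_walk w v n -> has_walk u v (S n).

Definition gdist (u v : V) (k : nat) : Prop :=
  has_walk u v k /\ forall m, has_walk u v m -> k <= m.

Definition connected : Prop := forall u v : V, exists n, has_walk u v n.

Definition locally_finite : Prop :=
  forall v : V, exists l : list V, forall w, adj v w -> In w l.

Definition infinite_vertex_set : Prop := ~ exists l : list V, forall v : V, In v l.

Definition resolves (x u v : V) : Prop :=
  forall k l, gdist u x k -> gdist v x l -> k <> l.

Definition resolving_set (S : list V) : Prop :=
  forall u v : V, u <> v -> exists x, In x S /\ resolves x u v.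

Definition finite_metric_dimension : Prop := exists S : list V, resolving_set S.

(* A metric ray, given by its vertex ordering u_0, u_1, ...; its vertex set
   is the image of u. *)
Definition metric_ray (u : nat -> V) : Prop :=
  (forall i j, u i = u j -> i = j) /\
  (forall k, adj (u k) (u (S k))) /\
  (forall k, gdist (u 0) (u k) k).

End Graph.

From Stdlib Require Import List Arith.
From Stdlib Require Import Lia ZArith Wf_nat FinFun Classical ClassicalEpsilon.
Import ListNotations.

(* Fix a distance function d of G (it exists by connectivity and
   choice).  For a metric ray u and any vertex s, the quantity d(u_k,s) - k is
   nonincreasing in k and bounded below, hence eventually equal to a constant
   b_u(s), the Busemann value of u at s.  For a base vertex s0, the normalized
   profile s |-> b_u(s) - b_u(s0) takes values in [-d(s0,s), d(s0,s)], so on a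
   finite resolving set S only finitely many profiles occur.  Given infinitely
   many pairwise disjoint rays, the pigeonhole principle yields two distinct
   rays u, w with the same profile on S; then for k large the distinct vertices
   u_k and w_(k + b_u(s0) - b_w(s0)) have equal distances to every vertex of S,
   contradicting that S is resolving. *)

Lemma least_nat (P : nat -> Prop) :
  (exists n, P n) -> exists m, P m /\ forall k, P k -> m <= k.
Proof.
  intros Hex.
  destruct (dec_inh_nat_subset_has_unique_least_element P (fun n => classic (P n)) Hex)
    as [m [Hm _]].
  exists m; exact Hm.
Qed.

Lemma noninc_eventually_constant (g : nat -> nat) :
  (forall k, g (S k) <= g k) -> exists K, forall k, K <= k -> g k = g K.
Proof.
  intros Hstep.
  assert (Hmono : forall K k, K <= k -> g k <= g K).
  { intros K k Hk; induction Hk as [|k Hk IH]; [lia|].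
    specialize (Hstep k); lia. }
  destruct (least_nat (fun v => exists k, g k = v)) as [m [[K HK] Hleast]];
    [exists (g 0), 0; reflexivity|].
  exists K; intros k Hk.
  specialize (Hmono K k Hk); specialize (Hleast (g k) (ex_intro _ k eq_refl)); lia.
Qed.

Definition eventually (P : nat -> Prop) : Prop := exists K, forall k, K <= k -> P k.

Lemma eventually_forall_in (A : Type) (P : A -> nat -> Prop) (L : list A) :
  (forall a, In a L -> eventually (P a)) ->
  eventually (fun k => forall a, In a L -> P a k).
Proof.
  induction L as [|a L IH]; intros HL.
  - exists 0; intros k _ b [].
  - destruct (HL a (or_introl eq_refl)) as [K1 H1].
    destruct IH as [K2 H2]; [intros b Hb; apply HL; now right|].
    exists (K1 + K2); intros k Hk b [<-|Hb].
    + apply H1; lia.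
    + apply H2; [lia|exact Hb].
Qed.

Lemma pigeonhole (A : Type) (f : nat -> A) (L : list A) :
  (forall i, In (f i) L) -> exists i j, i <> j /\ f i = f j.
Proof.
  intros Hf; apply NNPP; intros Hrep.
  assert (Hinj : Injective f).
  { intros i j Hij; apply NNPP; intros Hne; apply Hrep; eauto. }
  assert (Hincl : incl (map f (seq 0 (S (length L)))) L).
  { intros x Hx; apply in_map_iff in Hx as [i [<- _]]; apply Hf. }
  pose proof (NoDup_incl_length (Injective_map_NoDup Hinj (seq_NoDup _ 0)) Hincl) as Hlen.
  rewrite length_map, length_seq in Hlen; lia.
Qed.

Fixpoint box (A : Type) (B : A -> nat) (l : list A) : list (list nat) :=
  match l with
  | [] => [[]]
  | a :: l' => flat_map (fun n => map (cons n) (box A B l')) (seq 0 (S (B a)))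
  end.

Lemma in_box (A : Type) (B g : A -> nat) (l : list A) :
  (forall a, In a l -> g a <= B a) -> In (map g l) (box A B l).
Proof.
  induction l as [|a l IH]; intros Hg; [now left|].
  change (In (g a :: map g l) (flat_map (fun n => map (cons n) (box A B l)) (seq 0 (S (B a))))).
  apply in_flat_map; exists (g a); split.
  - apply in_seq; specialize (Hg a (or_introl eq_refl)); lia.
  - apply in_map, IH; intros b Hb; apply Hg; now right.
Qed.

Section Metric.
Variable V : Type.
Variable adj : V -> V -> Prop.
Hypothesis Hsym : forall u v, adj u v -> adj v u.

Lemma walk_app u w v a b :
  has_walk V adj u w a -> has_walk V adj w v b -> has_walk V adj u v (a + b).
Proof.
  intros H; revert v b; induction H as [|u x w n Hux Hxw IH]; intros v b Hwv;
    simpl; [exact Hwv|].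
  eapply walk_cons; eauto.
Qed.

Lemma walk_rev u v n : has_walk V adj u v n -> has_walk V adj v u n.
Proof.
  induction 1 as [|u x v n Hux Hxv IH]; [constructor|].
  replace (S n) with (n + 1) by lia.
  eapply walk_app; [exact IH|].
  eapply walk_cons; [apply Hsym; exact Hux|constructor].
Qed.

Lemma distance_function_exists :
  connected V adj -> exists d : V -> V -> nat, forall u v, gdist V adj u v (d u v).
Proof.
  intros Hconn.
  destruct (choice (fun p (n : nat) => gdist V adj (fst p) (snd p) n)) as [f Hf].
  - intros [u v]; simpl.
    destruct (least_nat _ (Hconn u v)) as [m Hm]; exists m; exact Hm.
  - exists (fun u v => f (u, v)); intros u v; exact (Hf (u, v)).
Qed.

Variable d : V -> V -> nat.
Hypothesis Hd : forall u v, gdist V adj u v (d u v).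

Lemma dist_le_walk u v n : has_walk V adj u v n -> d u v <= n.
Proof. apply (Hd u v). Qed.

Lemma dist_unique u v k : gdist V adj u v k -> d u v = k.
Proof.
  intros [Hk Hmin]; destruct (Hd u v) as [Hduv Hdmin].
  specialize (Hmin _ Hduv); specialize (Hdmin _ Hk); lia.
Qed.

Lemma dist_triangle u w v : d u v <= d u w + d w v.
Proof. apply dist_le_walk; apply walk_app with w; apply Hd. Qed.

Lemma dist_sym u v : d u v = d v u.
Proof. apply Nat.le_antisymm; apply dist_le_walk, walk_rev, Hd. Qed.

Lemma dist_adj u v : adj u v -> d u v <= 1.
Proof. intros Huv; apply dist_le_walk; eapply walk_cons; [exact Huv|constructor]. Qed.

Lemma resolves_dist x u v : resolves V adj x u v -> d u x <> d v x.
Proof. intros Hres; apply Hres; apply Hd. Qed.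

Lemma busemann_exists (u : nat -> V) (s : V) :
  metric_ray V adj u ->
  exists b : Z, eventually (fun k => Z.of_nat (d (u k) s) = (Z.of_nat k + b)%Z).
Proof.
  intros [_ [Hadj Hgeo]].
  assert (Hfar : forall k, k <= d (u k) s + d (u 0) s).
  { intros k; pose proof (dist_unique _ _ _ (Hgeo k)).
    pose proof (dist_triangle (u 0) s (u k)); pose proof (dist_sym (u k) s); lia. }
  assert (Hstep : forall k, d (u (S k)) s <= S (d (u k) s)).
  { intros k; pose proof (dist_triangle (u (S k)) (u k) s).
    pose proof (dist_adj _ _ (Hsym _ _ (Hadj k))); lia. }
  destruct (noninc_eventually_constant (fun k => d (u k) s + d (u 0) s - k)) as [K HK].
  { intros k; specialize (Hstep k); specialize (Hfar k); lia. }
  exists (Z.of_nat (d (u K) s + d (u 0%nat) s - K) - Z.of_nat (d (u 0%nat) s))%Z, K.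
  intros k Hk; specialize (HK k Hk); specialize (Hfar k); lia.
Qed.

Lemma busemann_profile_bound (u : nat -> V) (s s0 : V) (b b0 : Z) :
  eventually (fun k => Z.of_nat (d (u k) s) = (Z.of_nat k + b)%Z) ->
  eventually (fun k => Z.of_nat (d (u k) s0) = (Z.of_nat k + b0)%Z) ->
  (Z.abs (b - b0) <= Z.of_nat (d s0 s))%Z.
Proof.
  intros [K HK] [K0 HK0].
  specialize (HK (K + K0) ltac:(lia)); specialize (HK0 (K + K0) ltac:(lia)).
  pose proof (dist_triangle (u (K + K0)) s0 s).
  pose proof (dist_triangle (u (K + K0)) s s0).
  pose proof (dist_sym s s0); lia.
Qed.

End Metric.

Lemma equal_profiles_not_separated (A : Type) (dist : A -> A -> nat)
  (x y : nat -> A) (S : list A) (bx by_ : A -> Z) (c : Z) :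
  (forall s, In s S -> eventually (fun k => Z.of_nat (dist (x k) s) = (Z.of_nat k + bx s)%Z)) ->
  (forall s, In s S -> eventually (fun k => Z.of_nat (dist (y k) s) = (Z.of_nat k + by_ s)%Z)) ->
  (forall s, In s S -> (bx s - by_ s)%Z = c) ->
  exists k l, forall s, In s S -> dist (x k) s = dist (y l) s.
Proof.
  intros Hx Hy Hc.
  destruct (eventually_forall_in _ _ _ Hx) as [Kx HKx].
  destruct (eventually_forall_in _ _ _ Hy) as [Ky HKy].
  set (k := Kx + Ky + Z.to_nat (Z.abs c)).
  exists k, (Z.to_nat (Z.of_nat k + c)); intros s Hs.
  specialize (HKx k ltac:(lia) s Hs).
  specialize (HKy (Z.to_nat (Z.of_nat k + c)) ltac:(lia) s Hs).
  specialize (Hc s Hs); lia.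
Qed.

Theorem theorem2 (V : Type) (adj : V -> V -> Prop)
  (Hsym : forall u v, adj u v -> adj v u)
  (Hirr : forall u, ~ adj u u)
  (Hinf : infinite_vertex_set V)
  (Hconn : connected V adj)
  (Hlf : locally_finite V adj)
  (Hdim : finite_metric_dimension V adj) :
  ~ exists R : nat -> nat -> V,
      (forall i, metric_ray V adj (R i)) /\
      (forall i j, i <> j -> forall k l, R i k <> R j l).
Proof.
  intros [R [Hray Hdisj]].
  destruct Hdim as [Sres HS].
  destruct (distance_function_exists V adj Hconn) as [d Hd].
  destruct (choice (fun i (b : V -> Z) => forall s,
      eventually (fun k => Z.of_nat (d (R i k) s) = (Z.of_nat k + b s)%Z)))
    as [b Hb].
  { intros i; apply (choice (fun s c =>
      eventually (fun k => Z.of_nat (d (R i k) s) = (Z.of_nat k + c)%Z))); intros s.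
    exact (busemann_exists V adj Hsym d Hd (R i) s (Hray i)). }
  set (s0 := R 0 0).
  (* profile of ray i: the values b_i(s) - b_i(s0) + d(s0,s) in [0, 2 d(s0,s)], s in S *)
  set (profile := fun i => map (fun s => Z.to_nat (b i s - b i s0 + Z.of_nat (d s0 s))) Sres).
  destruct (pigeonhole _ profile (box V (fun s => 2 * d s0 s) Sres)) as [i [j [Hij Hprof]]].
  { intros i; apply in_box; intros s _.
    pose proof (busemann_profile_bound V adj Hsym d Hd (R i) s s0 _ _ (Hb i s) (Hb i s0)); lia. }
  destruct (equal_profiles_not_separated V d (R i) (R j) Sres (b i) (b j)
              (b i s0 - b j s0) (fun s _ => Hb i s) (fun s _ => Hb j s))
    as [k [l Hkl]].
  { intros s Hs.
    pose proof (proj1 map_ext_in_iff Hprof s Hs) as Hs_eq; simpl in Hs_eq.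
    pose proof (busemann_profile_bound V adj Hsym d Hd (R i) s s0 _ _ (Hb i s) (Hb i s0)).
    pose proof (busemann_profile_bound V adj Hsym d Hd (R j) s s0 _ _ (Hb j s) (Hb j s0)).
    lia. }
  destruct (HS (R i k) (R j l) (Hdisj i j Hij k l)) as [s [Hs Hres]].
  exact (resolves_dist V adj d Hd s _ _ Hres (Hkl s Hs)).
Qed.
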